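(* Suppose $\nabla f$ is Lipschitz continuous on $\mathbb{R}^n$ with modulus $L$, $f$ is twice continuously differentiable, and let $x^*\in\mathbb{R}^n$ and $\Lambda_*\in\mathbb S^n_{++}$ with $\lambda_MI\succeq\Lambda_*\succeq\lambda_mI$, $\lambda_m>0$, be such that every $M\in\mathcal M^{\Lambda_*}(x^* )$ is nonsingular with $\|M^{-1}\|\le C$ for some $C>0$. Then for all $\beta_c\in(0,1)$ and $\gamma_c\in(0,\beta_c/C)$ there exists $\varepsilon_c>0$, independent of the sample batches, such that for any sample batches $s,t$ and any $x$ satisfying $$x\in B_{\varepsilon_c}(x^* ),\qquad\|\nabla f(x)-G_s(x)\|\le\varepsilon_c,\qquad\|\nabla^2f(x)-H_t(x)\|\le0.5\lambda_m\gamma_c,$$ every $M\in\mathcal M^{\Lambda_*}_{s,t}(x)$ is invertible with $\|M^{-1}\|\le C/(1-\beta_c)$.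
   Context: $r:\mathbb{R}^n\to(-\infty,+\infty]$ convex, lsc, proper; $\mathrm{prox}^\Lambda_r(x):=\arg\min_y r(y)+\frac12\langle x-y,\Lambda(x-y)\rangle$; $\partial$ denotes the Clarke generalized Jacobian. $u^\Lambda(x):=x-\Lambda^{-1}\nabla f(x)$, $\mathcal M^\Lambda(x):=\{(I-D)+D\Lambda^{-1}\nabla^2f(x):D\in\partial\mathrm{prox}^\Lambda_r(u^\Lambda(x))\}$. Sample batches $s,t$ yield a stochastic gradient $G_s(x)\in\mathbb{R}^n$ and a stochastic Hessian $H_t(x)\in\mathbb S^n$; $u^\Lambda_s(x):=x-\Lambda^{-1}G_s(x)$ and $\mathcal M^\Lambda_{s,t}(x):=\{(I-D)+D\Lambda^{-1}H_t(x):D\in\partial\mathrm{prox}^\Lambda_r(u^\Lambda_s(x))\}$. Matrix norms are spectral norms; $B_\varepsilon(x^* )$ is the open Euclidean ball. *)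

From Stdlib Require Import Reals.
From mathcomp Require Import all_boot.
Set Implicit Arguments. Unset Strict Implicit. Unset Printing Implicit Defensive.
Open Scope R_scope.

Definition vec (n : nat) := 'I_n -> R.
Definition mat (n : nat) := 'I_n -> 'I_n -> R.

Definition vsum n (F : 'I_n -> R) : R := \big[Rplus/R0]_(i : 'I_n) F i.

Definition dot n (x y : vec n) : R := vsum (fun i => x i * y i).
Definition vnorm n (x : vec n) : R := sqrt (dot x x).
Definition vadd n (x y : vec n) : vec n := fun i => x i + y i.
Definition vsub n (x y : vec n) : vec n := fun i => x i - y i.

Definition mv n (M : mat n) (v : vec n) : vec n := fun i => vsum (fun j => M i j * v j).
Definition mm n (A B : mat n) : mat n := fun i k => vsum (fun j => A i j * B j k).
Definition madd n (A B : mat n) : mat n := fun i j => A i j + B i j.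
Definition msub n (A B : mat n) : mat n := fun i j => A i j - B i j.
Definition mscale n (a : R) (A : mat n) : mat n := fun i j => a * A i j.
Definition idm n : mat n := fun i j => if i == j then 1 else 0.
Definition mat_symmetric n (A : mat n) : Prop := forall i j, A i j = A j i.

Definition is_spec_norm n (M : mat n) (c : R) : Prop :=
  is_lub (fun t => exists v : vec n, vnorm v <= 1 /\ t = vnorm (mv M v)) c.
Definition spec_norm_le n (M : mat n) (C : R) : Prop :=
  exists c, is_spec_norm M c /\ c <= C.

Definition is_inverse n (M N : mat n) : Prop := mm M N = @idm n /\ mm N M = @idm n.

Definition inv_norm_le n (M : mat n) (C : R) : Prop :=
  exists N, is_inverse M N /\ spec_norm_le N C.

(* extended reals (-oo is excluded: r is proper) *)
Inductive ereal := EFin of R | EPInf.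

Definition closed_set n (S : vec n -> Prop) : Prop :=
  forall x, (forall eps, 0 < eps -> exists y, S y /\ vnorm (vsub y x) < eps) -> S x.

Definition convex_fun n (r : vec n -> ereal) : Prop :=
  forall (x y : vec n) a b th, 0 < th < 1 -> r x = EFin a -> r y = EFin b ->
    exists c, r (fun i => th * x i + (1 - th) * y i) = EFin c /\ c <= th * a + (1 - th) * b.

Definition lsc_fun n (r : vec n -> ereal) : Prop :=
  forall a, closed_set (fun x => exists c, r x = EFin c /\ c <= a).

Definition proper_fun n (r : vec n -> ereal) : Prop := exists x, r x <> EPInf.

Definition is_prox n (Lam : mat n) (r : vec n -> ereal) (x p : vec n) : Prop :=
  exists a, r p = EFin a /\
    forall y b, r y = EFin b ->
      a + / 2 * dot (vsub x p) (mv Lam (vsub x p)) <= b + / 2 * dot (vsub x y) (mv Lam (vsub x y)).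

Definition jacobian_at n (P : vec n -> vec n) (x : vec n) (J : mat n) : Prop :=
  forall eps, 0 < eps -> exists delta, 0 < delta /\ forall y, vnorm (vsub y x) < delta ->
    vnorm (vsub (vsub (P y) (P x)) (mv J (vsub y x))) <= eps * vnorm (vsub y x).

Definition B_subdiff n (P : vec n -> vec n) (u : vec n) (D : mat n) : Prop :=
  exists (uk : nat -> vec n) (Jk : nat -> mat n),
    (forall k, jacobian_at P (uk k) (Jk k)) /\
    (forall eps, 0 < eps -> exists N, forall k, (N <= k)%nat -> vnorm (vsub (uk k) u) < eps) /\
    (forall i j, Un_cv (fun k => Jk k i j) (D i j)).

Definition clarke_jac n (P : vec n -> vec n) (u : vec n) (D : mat n) : Prop :=
  exists (m : nat) (w : 'I_m -> R) (Ds : 'I_m -> mat n),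
    (forall k, 0 <= w k) /\ \big[Rplus/R0]_(k : 'I_m) w k = 1 /\
    (forall k, B_subdiff P u (Ds k)) /\
    D = (fun i j => \big[Rplus/R0]_(k : 'I_m) (w k * Ds k i j)).

Definition in_Mset n (P : vec n -> vec n) (LamInv Hs : mat n) (u : vec n) (M : mat n) : Prop :=
  exists D, clarke_jac P u D /\
    M = madd (msub (@idm n) D) (mm D (mm LamInv Hs)).

(* Since prox^Lam_r is firmly nonexpansive in the Lam-metric, every Jacobian of it, and
   hence every element D of its Clarke Jacobian, satisfies lm |D h| <= |Lam h|.  These
   Jacobians are therefore uniformly bounded, and compactness makes the Clarke Jacobian
   upper semicontinuous: near ustar = xstar - Lam^-1 grad f(xstar), every D is close to some
   Dstar in the Clarke Jacobian at ustar.  Then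
   M = (I - D) + D Lam^-1 H_t differs from Mstar = (I - Dstar) + Dstar Lam^-1 grad^2 f(xstar),
   an element of M^Lam(xstar), by at most gc in norm: the D - Dstar terms are small by upper
   semicontinuity, and the Hessian term by continuity of the Hessian at xstar together with
   the sampling error, damped by |Dstar Lam^-1 z| <= |z| / lm.  As gc C < bc, this gives
   |M v| >= (1 - bc) |v| / C, so M is invertible with |M^-1| <= C / (1 - bc). *)

From Stdlib Require Import Reals Lra Lia Psatz Classical IndefiniteDescription FunctionalExtensionality.
From mathcomp Require Import all_boot all_algebra.
From mathcomp Require Import Rstruct.
Set Implicit Arguments. Unset Strict Implicit. Unset Printing Implicit Defensive.
Open Scope R_scope.

Section FiniteSums.
Variable n : nat.
Implicit Types F G : 'I_n -> R.

Lemma eq_vsum F G : (forall i, F i = G i) -> vsum F = vsum G.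
Proof. by move=> H; apply: eq_bigr => i _; exact: H. Qed.

Lemma vsumD F G : vsum (fun i => F i + G i) = vsum F + vsum G.
Proof. by rewrite /vsum big_split. Qed.

Lemma vsumZ c F : vsum (fun i => c * F i) = c * vsum F.
Proof. by rewrite /vsum -(@big_distrr R R0 Rmult Rplus). Qed.

Lemma le_vsum F G : (forall i, F i <= G i) -> vsum F <= vsum G.
Proof.
move=> H; apply: (big_ind2 (fun a b => a <= b)) => [|a b c d|i _]; [lra | lra | exact: H].
Qed.

Lemma vsum_ge0 F : (forall i, 0 <= F i) -> 0 <= vsum F.
Proof. move=> H; apply: (big_ind (fun a => 0 <= a)) => [|a b|i _]; [lra | lra | exact: H]. Qed.

Lemma abs_vsum_le F : Rabs (vsum F) <= vsum (fun i => Rabs (F i)).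
Proof.
apply: (big_ind2 (fun a b => Rabs a <= b)) => [|a b c d H1 H2|i _].
- rewrite Rabs_R0; lra.
- apply: Rle_trans (Rabs_triang _ _) _; lra.
- lra.
Qed.

Lemma vsum0 F : (forall i, F i = 0) -> vsum F = 0.
Proof. by move=> H; rewrite /vsum big1 // => i _; exact: H. Qed.

Lemma vsum_const c : vsum (fun _ : 'I_n => c) = INR n * c.
Proof.
rewrite /vsum big_const card_ord; elim: n => [|k IH]; first by rewrite /=; lra.
by rewrite [iter _ _ _]/= IH S_INR; lra.
Qed.

Lemma le_vsum_term F i : (forall j, 0 <= F j) -> F i <= vsum F.
Proof.
move=> H; rewrite /vsum (bigD1 i) //=.
rewrite -[X in X <= _]Rplus_0_r; apply: Rplus_le_compat_l.
apply: (big_ind (fun a => 0 <= a)) => [|a b|j _]; [lra | lra | exact: H].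
Qed.

Lemma vsum_kronecker i F : vsum (fun j => (if i == j then 1 else 0) * F j) = F i.
Proof.
rewrite /vsum (bigD1 i) //= eqxx big1 /= => [|j Hj]; first lra.
by rewrite eq_sym (negbTE Hj); lra.
Qed.
End FiniteSums.

Lemma exchange_vsum n m (F : 'I_n -> 'I_m -> R) :
  vsum (fun i => vsum (fun j => F i j)) = vsum (fun j => vsum (fun i => F i j)).
Proof. exact: exchange_big. Qed.

Section Euclid.
Variable n : nat.
Implicit Types x y z v : vec n.

Lemma dotC x y : dot x y = dot y x.
Proof. by apply: eq_vsum => i; lra. Qed.

Lemma dot_combl a b x y z :
  dot (fun i => a * x i + b * y i) z = a * dot x z + b * dot y z.
Proof. by rewrite /dot -!vsumZ -vsumD; apply: eq_vsum => i; lra. Qed.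

Lemma dot_combr a b x y z :
  dot z (fun i => a * x i + b * y i) = a * dot z x + b * dot z y.
Proof. by rewrite dotC dot_combl (dotC x) (dotC y). Qed.

Lemma vsub_comb x y : vsub x y = (fun i => 1 * x i + (-1) * y i).
Proof. by apply: functional_extensionality => i; rewrite /vsub; lra. Qed.

Lemma vadd_comb x y : vadd x y = (fun i => 1 * x i + 1 * y i).
Proof. by apply: functional_extensionality => i; rewrite /vadd; lra. Qed.

Lemma dotBl x y z : dot (vsub x y) z = dot x z - dot y z.
Proof. by rewrite vsub_comb dot_combl; lra. Qed.

Lemma dotBr x y z : dot z (vsub x y) = dot z x - dot z y.
Proof. by rewrite vsub_comb dot_combr; lra. Qed.

Lemma dot_ge0 x : 0 <= dot x x.
Proof. by apply: vsum_ge0 => i; nra. Qed.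

Lemma vnorm_ge0 x : 0 <= vnorm x.
Proof. exact: sqrt_pos. Qed.

Lemma vnorm_sqr x : vnorm x * vnorm x = dot x x.
Proof. by rewrite /vnorm sqrt_sqrt //; exact: dot_ge0. Qed.

Lemma abs_coord_le_vnorm x i : Rabs (x i) <= vnorm x.
Proof.
rewrite /vnorm -sqrt_Rsqr_abs; apply: sqrt_le_1_alt.
by apply: (le_vsum_term (F := fun j => x j * x j)) => j; nra.
Qed.

Lemma vnorm_eq0 x : vnorm x = 0 -> x = (fun _ => 0).
Proof.
move=> H; apply: functional_extensionality => i.
have := abs_coord_le_vnorm x i; rewrite H => Hi.
by apply: NNPP => Hx; have := @Rabs_no_R0 (x i) Hx; have := Rabs_pos (x i); lra.
Qed.

Lemma vnorm0 : vnorm (fun _ : 'I_n => 0) = 0.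
Proof. by rewrite /vnorm /dot vsum0 ?sqrt_0 // => i; lra. Qed.

Lemma vnormZ a x : vnorm (fun i => a * x i) = Rabs a * vnorm x.
Proof.
rewrite /vnorm.
have -> : dot (fun i => a * x i) (fun i => a * x i) = Rsqr a * dot x x.
  by rewrite /dot -vsumZ; apply: eq_vsum => i; rewrite /Rsqr; lra.
by rewrite sqrt_mult ?sqrt_Rsqr_abs //; [exact: Rle_0_sqr | exact: dot_ge0].
Qed.

Lemma vnormN x : vnorm (fun i => -1 * x i) = vnorm x.
Proof. by rewrite vnormZ Rabs_Ropp Rabs_R1; lra. Qed.

(* The discriminant of [t |-> <x + t y, x + t y>], evaluated at its minimiser. *)
Lemma cauchy_schwarz x y : Rabs (dot x y) <= vnorm x * vnorm y.
Proof.
have Hnx := vnorm_ge0 x; have Hny := vnorm_ge0 y.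
have [Hy0|Hy0] := Req_dec (dot y y) 0.
  have -> : dot x y = 0.
    by rewrite (vnorm_eq0 (_ : vnorm y = 0)) /dot ?vsum0 // => [i|]; [lra | rewrite /vnorm Hy0 sqrt_0].
  rewrite Rabs_R0; nra.
have Hyp : 0 < dot y y by have := dot_ge0 y; lra.
have Hsq : dot x y * dot x y <= dot x x * dot y y.
  set t := - dot x y / dot y y.
  have := dot_ge0 (fun i => 1 * x i + t * y i).
  rewrite dot_combl !dot_combr (dotC y x) => H.
  have Hprod : 0 <= (dot x x + 2 * t * dot x y + t * t * dot y y) * dot y y by nra.
  have E : (dot x x + 2 * t * dot x y + t * t * dot y y) * dot y y
           = dot x x * dot y y - dot x y * dot x y by rewrite /t; field; lra.
  lra.
apply: Rsqr_incr_0_var; last nra.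
by rewrite -Rsqr_abs /Rsqr -(vnorm_sqr x) -(vnorm_sqr y) in Hsq *; nra.
Qed.

Lemma vnormD_le x y : vnorm (vadd x y) <= vnorm x + vnorm y.
Proof.
have Hnx := vnorm_ge0 x; have Hny := vnorm_ge0 y.
rewrite /vnorm -[X in _ <= X]sqrt_Rsqr; last by rewrite /vnorm in Hnx Hny; lra.
apply: sqrt_le_1_alt; rewrite vadd_comb dot_combl !dot_combr (dotC y x).
have := cauchy_schwarz x y; have := Rle_abs (dot x y).
have := vnorm_sqr x; have := vnorm_sqr y.
rewrite /Rsqr /vnorm in Hnx Hny *; nra.
Qed.

Lemma vnormB_le x y : vnorm (vsub x y) <= vnorm x + vnorm y.
Proof.
have -> : vsub x y = vadd x (fun i => -1 * y i).
  by apply: functional_extensionality => i; rewrite /vsub /vadd; lra.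
by apply: Rle_trans (vnormD_le _ _) _; rewrite vnormN; lra.
Qed.

Lemma vnorm_distC x y : vnorm (vsub x y) = vnorm (vsub y x).
Proof.
rewrite -vnormN; congr vnorm; apply: functional_extensionality => i.
by rewrite /vsub; lra.
Qed.

Lemma vnorm_dist_triangle x y z : vnorm (vsub x z) <= vnorm (vsub x y) + vnorm (vsub y z).
Proof.
have -> : vsub x z = vadd (vsub x y) (vsub y z).
  by apply: functional_extensionality => i; rewrite /vadd /vsub; lra.
exact: vnormD_le.
Qed.

Lemma vnorm_sub_ge x y : vnorm x - vnorm y <= vnorm (vsub x y).
Proof.
have := vnorm_dist_triangle x y (fun _ => 0).
have E : forall w : vec n, vsub w (fun _ => 0) = w.
  by move=> w; apply: functional_extensionality => i; rewrite /vsub; lra.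
by rewrite !E; lra.
Qed.
End Euclid.

Section Matrices.
Variable n : nat.
Implicit Types (x y v : vec n) (A B : mat n).

Lemma mv_comb A a b x y :
  mv A (fun i => a * x i + b * y i) = (fun i => a * mv A x i + b * mv A y i).
Proof.
apply: functional_extensionality => i.
by rewrite /mv -!vsumZ -vsumD; apply: eq_vsum => j; lra.
Qed.

Lemma mvZ A a x : mv A (fun i => a * x i) = (fun i => a * mv A x i).
Proof. by apply: functional_extensionality => i; rewrite /mv -vsumZ; apply: eq_vsum => j; lra. Qed.

Lemma mvB A x y : mv A (vsub x y) = vsub (mv A x) (mv A y).
Proof. by rewrite !vsub_comb mv_comb. Qed.

Lemma mv0 A : mv A (fun _ => 0) = (fun _ => 0).
Proof. by apply: functional_extensionality => i; rewrite /mv vsum0 // => j; lra. Qed.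

Lemma mv_madd A B v : mv (madd A B) v = vadd (mv A v) (mv B v).
Proof.
apply: functional_extensionality => i.
by rewrite /mv /vadd -vsumD; apply: eq_vsum => j; rewrite /madd; lra.
Qed.

Lemma mv_msub A B v : mv (msub A B) v = vsub (mv A v) (mv B v).
Proof.
apply: functional_extensionality => i; rewrite /mv /vsub.
rewrite (eq_vsum (G := fun j => A i j * v j + -1 * (B i j * v j))); last by move=> j; rewrite /msub; lra.
by rewrite vsumD vsumZ; lra.
Qed.

Lemma mv_mm A B v : mv (mm A B) v = mv A (mv B v).
Proof.
apply: functional_extensionality => i; rewrite /mv /mm.
rewrite (eq_vsum (G := fun j => vsum (fun k => A i k * B k j * v j))); last first.
  by move=> j; rewrite Rmult_comm -vsumZ; apply: eq_vsum => k; lra.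
by rewrite exchange_vsum; apply: eq_vsum => k; rewrite -vsumZ; apply: eq_vsum => j; lra.
Qed.

Lemma mv_idm v : mv (@idm n) v = v.
Proof. by apply: functional_extensionality => i; rewrite /mv /idm vsum_kronecker. Qed.

Lemma dot_mv_sym A x y : mat_symmetric A -> dot (mv A x) y = dot x (mv A y).
Proof.
move=> HA; rewrite /dot /mv.
rewrite (eq_vsum (G := fun i => vsum (fun j => A i j * x j * y i))); last first.
  by move=> i; rewrite Rmult_comm -vsumZ; apply: eq_vsum => k; lra.
rewrite exchange_vsum; apply: eq_vsum => j; rewrite -vsumZ.
by apply: eq_vsum => i; rewrite (HA i j); lra.
Qed.

Definition mbound A b := forall v, vnorm (mv A v) <= b * vnorm v.

Definition frob A := sqrt (vsum (fun i => vsum (fun j => A i j * A i j))).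

Lemma frob_ge0 A : 0 <= frob A.
Proof. exact: sqrt_pos. Qed.

(* Cauchy-Schwarz row by row. *)
Lemma mbound_frob A : mbound A (frob A).
Proof.
move=> v; rewrite /vnorm /frob -sqrt_mult; last exact: dot_ge0.
  2: by apply: vsum_ge0 => i; apply: vsum_ge0 => j; nra.
apply: sqrt_le_1_alt; rewrite /dot Rmult_comm -vsumZ; apply: le_vsum => i.
have Hrow : mv A v i * mv A v i <= dot (A i) (A i) * dot v v.
  have := cauchy_schwarz (A i) v; have := Rabs_pos (dot (A i) v).
  have := vnorm_sqr (A i); have := vnorm_sqr v; have := vnorm_ge0 (A i); have := vnorm_ge0 v.
  have := Rsqr_abs (dot (A i) v); rewrite /Rsqr.
  by rewrite /mv -/(dot (A i) v); nra.
by rewrite /dot in Hrow; lra.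
Qed.

Lemma mbound_le A b b' : mbound A b -> b <= b' -> mbound A b'.
Proof. by move=> H Hb v; apply: Rle_trans (H v) _; have := vnorm_ge0 v; nra. Qed.

Lemma mbound_entries A e : 0 <= e -> (forall i j, Rabs (A i j) <= e) -> mbound A (INR n * e).
Proof.
move=> He H; apply: mbound_le (mbound_frob A) _; rewrite /frob.
have Hn := pos_INR n.
rewrite -(sqrt_Rsqr (INR n * e)); last nra.
apply: sqrt_le_1_alt.
have -> : Rsqr (INR n * e) = vsum (fun _ : 'I_n => vsum (fun _ : 'I_n => e * e)).
  by rewrite !vsum_const /Rsqr; ring.
apply: le_vsum => i; apply: le_vsum => j.
have := H i j; have := Rabs_pos (A i j); have := Rsqr_abs (A i j); rewrite /Rsqr; nra.
Qed.

Lemma mbound_msub_trans A B C a c :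
  mbound (msub A B) a -> mbound (msub A C) c -> mbound (msub B C) (a + c).
Proof.
move=> HAB HAC v.
have -> : mv (msub B C) v = vsub (mv (msub A C) v) (mv (msub A B) v).
  by rewrite !mv_msub; apply: functional_extensionality => i; rewrite /vsub; lra.
by apply: Rle_trans (vnormB_le _ _) _; have := HAB v; have := HAC v; lra.
Qed.

Definition basisv (j : 'I_n) : vec n := fun k => if j == k then 1 else 0.

Lemma mv_basisv A i j : mv A (basisv j) i = A i j.
Proof.
by rewrite /mv -(vsum_kronecker j (A i)); apply: eq_vsum => k; rewrite /basisv; lra.
Qed.

Lemma vnorm_basisv j : vnorm (basisv j) = 1.
Proof.
rewrite /vnorm /dot (eq_vsum (G := fun k => (if j == k then 1 else 0) * basisv j k)) //.
by rewrite vsum_kronecker /basisv eqxx sqrt_1.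
Qed.

Lemma mbound_entry A b i j : mbound A b -> Rabs (A i j) <= b.
Proof.
move=> H; rewrite -mv_basisv; apply: Rle_trans (abs_coord_le_vnorm _ i) _.
by have := H (basisv j); rewrite vnorm_basisv; lra.
Qed.

Lemma spec_norm_le_mbound A b : spec_norm_le A b -> mbound A b.
Proof.
case=> c [[Hub _] Hcb] v.
have [Hv|Hv] := Req_dec (vnorm v) 0.
  by rewrite (vnorm_eq0 Hv) mv0 vnorm0; lra.
have Hp : 0 < vnorm v by have := vnorm_ge0 v; lra.
have Hw : vnorm (fun i => / vnorm v * v i) = 1.
  by rewrite vnormZ Rabs_right; [field; lra | apply: Rle_ge; apply: Rlt_le; apply: Rinv_0_lt_compat].
have := Hub _ (ex_intro _ _ (conj (Req_le _ _ Hw) erefl)).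
rewrite mvZ vnormZ Rabs_right; last by apply: Rle_ge; apply: Rlt_le; apply: Rinv_0_lt_compat.
move=> H1.
have -> : vnorm (mv A v) = vnorm v * (/ vnorm v * vnorm (mv A v)) by field; lra.
by nra.
Qed.

Lemma mbound_spec_norm_le A b : 0 <= b -> mbound A b -> spec_norm_le A b.
Proof.
move=> Hb H.
set S := fun t => exists v : vec n, vnorm v <= 1 /\ t = vnorm (mv A v).
have HSb : forall t, S t -> t <= b.
  by move=> t [v [Hv ->]]; apply: Rle_trans (H v) _; nra.
have Hne : exists t, S t.
  by exists 0, (fun _ => 0); rewrite mv0 vnorm0; split; lra.
have [c Hc] := completeness S (ex_intro _ b HSb) Hne.
by exists c; split => //; apply: (proj2 Hc).
Qed.
End Matrices.

Section Inverse.
Variable n : nat.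
Implicit Types M : mat n.

Lemma mm_mulmx (A B : mat n) :
  mm A B = (fun i j => ((((\matrix_(i, j) A i j)%R : 'M[R]_n) *m (\matrix_(i, j) B i j)%R) i j)%R).
Proof.
do 2 apply: functional_extensionality => ?.
by rewrite mxE /mm /vsum; apply: eq_bigr => k _; rewrite !mxE.
Qed.

Lemma idm_scalar_mx : @idm n = (fun i j => ((1%:M : 'M[R]_n) i j)%R).
Proof. by do 2 apply: functional_extensionality => ?; rewrite mxE /idm; case: eqP. Qed.

(* An injective square matrix is a unit of ['M[R]_n]; its inverse inherits the bound. *)
Lemma inv_norm_le_of_lower_bound M c :
  0 < c -> (forall v, c * vnorm v <= vnorm (mv M v)) -> inv_norm_le M (/ c).
Proof.
move=> Hc Hlow.
pose A : 'M[R]_n := (\matrix_(i, j) M i j)%R.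
have Hinj : forall v, mv M v = (fun _ => 0) -> v = (fun _ => 0).
  by move=> v Hv; apply: vnorm_eq0; have := Hlow v; rewrite Hv vnorm0; have := vnorm_ge0 v; nra.
have HA : A \in unitmx.
  rewrite -unitmx_tr -row_free_unit -kermx_eq0; apply/eqP/matrixP => i j; rewrite [RHS]mxE.
  set K := (kermx A^T)%R.
  have HKi : mv M (fun j => K i j) = (fun _ => 0).
    apply: functional_extensionality => i'.
    have := congr1 (fun X : 'M[R]_n => X i i') (mulmx_ker A^T)%R; rewrite /= !mxE => H.
    by etransitivity; last exact: H; apply: eq_bigr => k _; rewrite !mxE Rmult_comm.
  by have := congr1 (fun f => f j) (Hinj _ HKi).
pose N : mat n := fun i j => invmx A i j.
have EN : ((\matrix_(i, j) N i j)%R : 'M[R]_n) = invmx A by apply/matrixP => i j; rewrite mxE.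
have HMN : mm M N = @idm n by rewrite mm_mulmx idm_scalar_mx EN -/A mulmxV.
have HNM : mm N M = @idm n by rewrite mm_mulmx idm_scalar_mx EN -/A mulVmx.
exists N; split=> //; apply: mbound_spec_norm_le; first by apply: Rlt_le; apply: Rinv_0_lt_compat.
move=> w; have := Hlow (mv N w); rewrite -mv_mm HMN mv_idm => H.
apply: (Rmult_le_reg_l c) => //.
by have -> : c * (/ c * vnorm w) = vnorm w by field; lra.
Qed.

Lemma inv_norm_le_lower M C : inv_norm_le M C -> forall v, vnorm v <= C * vnorm (mv M v).
Proof.
move=> [N [[_ HNM] HN]] v.
by have := spec_norm_le_mbound HN (mv M v); rewrite -mv_mm HNM mv_idm.
Qed.

Lemma inv_norm_le_perturb M M0 C g b :
  0 < C -> g < b / C -> b < 1 ->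
  inv_norm_le M0 C -> mbound (msub M M0) g -> inv_norm_le M (C / (1 - b)).
Proof.
move=> HC HgC Hb HM0 Hg.
have {}HgC : g * C < b.
  by have := Rmult_lt_compat_r C _ _ HC HgC; have -> : b / C * C = b by field; lra.
have -> : C / (1 - b) = / ((1 - b) / C) by field; lra.
apply: inv_norm_le_of_lower_bound; first by apply: Rdiv_lt_0_compat; lra.
move=> v; have H0 := inv_norm_le_lower HM0 v; have Hd := Hg v.
have Htri := vnorm_sub_ge (mv M0 v) (mv M v).
rewrite -vnorm_distC -mv_msub in Htri.
have Hv := vnorm_ge0 v.
apply: (Rmult_le_reg_l C) => //.
have -> : C * ((1 - b) / C * vnorm v) = (1 - b) * vnorm v by field; lra.
nra.
Qed.
End Inverse.

Lemma le_of_le_add_vanishing g k Q : (forall th, 0 < th < 1 -> g <= k + th * Q) -> g <= k.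
Proof.
move=> H; apply: Rnot_lt_le => Hlt.
have HQ := Rabs_pos Q.
set th := Rmin (/ 2) ((g - k) / (2 * (Rabs Q + 1))).
have Hp : 0 < (g - k) / (2 * (Rabs Q + 1)) by apply: Rdiv_lt_0_compat; lra.
have Hth : 0 < th < 1.
  by split; [apply: Rmin_pos; lra | apply: Rle_lt_trans (Rmin_l _ _) _; lra].
have H1 := H th Hth.
have H2 : th * Q <= th * Rabs Q by apply: Rmult_le_compat_l; [lra | exact: Rle_abs].
have H3 : th * (Rabs Q + 1) <= (g - k) / 2.
  apply: Rle_trans (Rmult_le_compat_r _ _ _ _ (Rmin_r _ _)) _; first lra.
  by right; field; lra.
nra.
Qed.

Definition scaled_lipschitz n (Lam : mat n) lm (P : vec n -> vec n) :=
  forall y u, lm * vnorm (vsub (P y) (P u)) <= vnorm (mv Lam (vsub y u)).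

Section Prox.
Variables (n : nat) (Lam : mat n) (r : vec n -> ereal).
Hypotheses (HLsym : mat_symmetric Lam) (Hrconv : convex_fun r).

Lemma dot_mv_symC x y : dot x (mv Lam y) = dot y (mv Lam x).
Proof. by rewrite -dot_mv_sym // dotC. Qed.

(* Optimality of [p] against the convex combinations [th z + (1 - th) p], as [th -> 0]. *)
Lemma prox_variational_ineq x p : is_prox Lam r x p ->
  exists a, r p = EFin a /\
    forall z b, r z = EFin b -> dot (vsub x p) (mv Lam (vsub z p)) <= b - a.
Proof.
move=> [a [Hp Hmin]]; exists a; split=> // z b Hz.
apply: (le_of_le_add_vanishing (Q := / 2 * dot (vsub z p) (mv Lam (vsub z p)))) => th Hth.
have [c [Hzc Hcle]] := Hrconv Hth Hz Hp.
have := Hmin _ _ Hzc.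
have -> : vsub x (fun i => th * z i + (1 - th) * p i)
        = (fun i => 1 * vsub x p i + (- th) * vsub z p i).
  by apply: functional_extensionality => i; rewrite /vsub; ring.
rewrite mv_comb dot_combl !dot_combr (dot_mv_symC (vsub z p)) => H.
apply: (Rmult_le_reg_l th); first lra.
by nra.
Qed.

(* Firm nonexpansiveness in the [Lam]-inner product, then Cauchy-Schwarz. *)
Lemma prox_scaled_lipschitz lm P :
  0 < lm -> (forall v, lm * dot v v <= dot v (mv Lam v)) ->
  (forall x, is_prox Lam r x (P x)) -> scaled_lipschitz Lam lm P.
Proof.
move=> Hlm Hlow HP x x'; move: (HP x) (HP x'); set p := P x; set p' := P x'.
move=> /prox_variational_ineq [a [Ha V1]] /prox_variational_ineq [a' [Ha' V2]].
have Hmono : dot (vsub p p') (mv Lam (vsub p p')) <= dot (mv Lam (vsub x x')) (vsub p p').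
  move: (V1 _ _ Ha') (V2 _ _ Ha).
  rewrite (dot_mv_sym _ _ HLsym) !mvB !dotBl !dotBr.
  rewrite (dot_mv_symC p' p) (dot_mv_symC x' p) (dot_mv_symC x p').
  lra.
have Hcs := cauchy_schwarz (mv Lam (vsub x x')) (vsub p p').
have Hab := Rle_abs (dot (mv Lam (vsub x x')) (vsub p p')).
have Hl := Hlow (vsub p p'); rewrite -vnorm_sqr in Hl.
have Hn1 := vnorm_ge0 (vsub p p'); have Hn2 := vnorm_ge0 (mv Lam (vsub x x')).
have [H0|H0] := Req_dec (vnorm (vsub p p')) 0; first by rewrite H0; nra.
by apply: (Rmult_le_reg_r (vnorm (vsub p p'))); nra.
Qed.
End Prox.

Lemma cv_const c : Un_cv (fun _ : nat => c) c.
Proof. by move=> e He; exists 0%nat => k _; rewrite /Rdist Rminus_diag Rabs_R0. Qed.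

Lemma cv_big (I : Type) (s : seq I) (F : nat -> I -> R) (l : I -> R) :
  (forall i, Un_cv (fun k => F k i) (l i)) ->
  Un_cv (fun k => \big[Rplus/R0]_(i <- s) F k i) (\big[Rplus/R0]_(i <- s) l i).
Proof.
move=> H; elim: s => [|a s IH].
  have -> : (fun k => \big[Rplus/R0]_(i <- [::]) F k i) = (fun _ => R0).
    by apply: functional_extensionality => k; rewrite big_nil.
  by rewrite big_nil; exact: cv_const.
have -> : (fun k => \big[Rplus/R0]_(i <- a :: s) F k i) = (fun k => F k a + \big[Rplus/R0]_(i <- s) F k i).
  by apply: functional_extensionality => k; rewrite big_cons.
by rewrite big_cons; exact: CV_plus.
Qed.

Lemma cv_mv n (Jk : nat -> mat n) D h :
  (forall i j, Un_cv (fun k => Jk k i j) (D i j)) ->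
  forall i, Un_cv (fun k => mv (Jk k) h i) (mv D h i).
Proof.
move=> H i; apply: (@cv_big _ _ (fun k j => Jk k i j * h j)) => j.
by apply: CV_mult; [exact: H | exact: cv_const].
Qed.

Lemma eventually_fin (T : finType) (P : T -> nat -> Prop) :
  (forall t, exists N, forall k, (N <= k)%nat -> P t k) ->
  exists N, forall k, (N <= k)%nat -> forall t, P t k.
Proof.
move=> H.
suff [N HN] : exists N, forall k t, t \in enum T -> (N <= k)%nat -> P t k.
  by exists N => k Hk t; apply: HN; rewrite ?mem_enum.
elim: (enum T) => [|a s [N IH]]; first by exists 0%nat.
have [Na Ha] := H a.
exists (maxn N Na) => k t; rewrite inE => /orP [/eqP -> | Ht] Hk.
  by apply: Ha; exact: leq_trans (leq_maxr _ _) Hk.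
by apply: IH => //; exact: leq_trans (leq_maxl _ _) Hk.
Qed.

Lemma cv_entrywise_eventually n (a : nat -> mat n) D :
  (forall i j, Un_cv (fun k => a k i j) (D i j)) ->
  forall e, 0 < e -> exists N, forall k, (N <= k)%nat -> forall i j, Rabs (a k i j - D i j) < e.
Proof.
move=> Ha e He.
have Hij : forall ij : 'I_n * 'I_n,
    exists N, forall k, (N <= k)%nat -> Rabs (a k ij.1 ij.2 - D ij.1 ij.2) < e.
  move=> [i j]; have [N HN] := Ha i j e He.
  by exists N => k /leP Hk; exact: HN.
have [N HN] := eventually_fin Hij.
by exists N => k Hk i j; exact: (HN k Hk (i, j)).
Qed.

Lemma near_fin (T : finType) n (x0 : vec n) (P : T -> vec n -> Prop) :
  (forall t, exists d, 0 < d /\ forall y, vnorm (vsub y x0) < d -> P t y) ->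
  exists d, 0 < d /\ forall y, vnorm (vsub y x0) < d -> forall t, P t y.
Proof.
move=> H.
suff [d [Hd HN]] : exists d, 0 < d /\ forall y t, t \in enum T -> vnorm (vsub y x0) < d -> P t y.
  by exists d; split=> // y Hy t; apply: HN; rewrite ?mem_enum.
elim: (enum T) => [|a s [d [Hd IH]]]; first by exists 1; split=> //; lra.
have [da [Hda Ha]] := H a.
exists (Rmin d da); split; first exact: Rmin_pos.
move=> y t; rewrite inE => /orP [/eqP -> | Ht] Hy.
  by apply: Ha; have := Rmin_r d da; lra.
by apply: IH => //; have := Rmin_l d da; lra.
Qed.

Lemma inv_Sn_lt eps : 0 < eps -> exists N, / INR N.+1 < eps.
Proof.
move=> He; have [N [HN HN0]] := archimed_cor1 eps He.
exists N; apply: Rle_lt_trans HN.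
by apply: Rinv_le_contravar; [apply: lt_0_INR | apply: le_INR]; lia.
Qed.

Lemma inv_Sn_le (a b : nat) : (a <= b)%nat -> / INR b.+1 <= / INR a.+1.
Proof.
by move=> /leP H; apply: Rinv_le_contravar; [apply: lt_0_INR | apply: le_INR]; lia.
Qed.

Lemma increasing_ge_id (phi : nat -> nat) : {homo phi : i j / (i < j)%nat} -> forall k, (k <= phi k)%nat.
Proof. by move=> Hphi; elim=> [|k IH] //; exact: leq_ltn_trans IH (Hphi _ _ (ltnSn k)). Qed.

Lemma cv_subseq u l (phi : nat -> nat) :
  {homo phi : i j / (i < j)%nat} -> Un_cv u l -> Un_cv (fun k => u (phi k)) l.
Proof.
move=> Hphi Hu e He; have [N HN] := Hu e He; exists N => k Hk; apply: HN.
by apply/leP; apply: leq_trans (increasing_ge_id Hphi k); exact/leP.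
Qed.

Lemma bolzano_subseq (x : nat -> R) B : (forall k, Rabs (x k) <= B) ->
  exists phi : nat -> nat, {homo phi : i j / (i < j)%nat} /\ exists l, Un_cv (fun k => x (phi k)) l.
Proof.
move=> HB.
have Hb : forall k, - B <= x k <= B.
  by move=> k; have := HB k; have := Rle_abs (x k); have := Rle_abs (- x k); rewrite Rabs_Ropp; lra.
have [l Hl] := @Bolzano_Weierstrass x _ (compact_P3 (- B) B) Hb.
have Hcl : forall N k, exists p, (N <= p)%nat /\ Rabs (x p - l) < / INR k.+1.
  move=> N k.
  have Hpos : 0 < / INR k.+1 by apply: Rinv_0_lt_compat; apply: lt_0_INR; lia.
  have Hnb : neighbourhood (fun y => Rabs (y - l) < / INR k.+1) l.
    by exists (mkposreal _ Hpos).
  have [p [/leP Hp Hv]] := Hl _ N Hnb.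
  by exists p.
have [sel Hsel] := functional_choice (fun Nk p => (Nk.1 <= p)%nat /\ Rabs (x p - l) < / INR Nk.2.+1)
  (fun Nk => Hcl Nk.1 Nk.2).
pose fix phi k := if k is k'.+1 then sel ((phi k').+1, k) else sel (0%nat, 0%nat).
exists phi; split.
  by apply: homo_ltn => [y x' z|k]; [exact: ltn_trans | exact: (proj1 (Hsel (_, _)))].
exists l => e He; have [N HN] := inv_Sn_lt He; exists N => k /leP Hk.
have Hk' : Rabs (x (phi k) - l) < / INR k.+1 by case: k Hk => [|k] _; exact: (proj2 (Hsel (_, _))).
by apply: Rlt_le_trans Hk' _; apply: Rle_trans (inv_Sn_le Hk) _; lra.
Qed.

Lemma bolzano_fin (T : finType) (a : nat -> T -> R) B : (forall k t, Rabs (a k t) <= B) ->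
  exists phi : nat -> nat, {homo phi : i j / (i < j)%nat} /\
  exists l : T -> R, forall t, Un_cv (fun k => a (phi k) t) (l t).
Proof.
move=> HB.
suff [phi [Hphi Hl]] : exists phi : nat -> nat, {homo phi : i j / (i < j)%nat} /\
    forall t, t \in enum T -> exists l, Un_cv (fun k => a (phi k) t) l.
  have [l Hcv] := functional_choice _ (fun t => Hl t (mem_enum _ t)).
  by exists phi; split=> //; exists l.
elim: (enum T) => [|q s [phi [Hphi IH]]]; first by exists id; split=> [i j|t]; rewrite ?in_nil.
have [psi [Hpsi [l Hl]]] := bolzano_subseq (x := fun k => a (phi k) q) (fun k => HB _ _).
exists (fun k => phi (psi k)); split => [i j Hij|t]; first exact/Hphi/Hpsi.
rewrite inE => /orP [/eqP -> | Ht]; first by exists l.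
have [l' Hl'] := IH t Ht; exists l'.
exact: (cv_subseq (u := fun k => a (phi k) t)).
Qed.

Definition scaled_bounded n (Lam : mat n) lm (D : mat n) :=
  forall h, lm * vnorm (mv D h) <= vnorm (mv Lam h).

Lemma vnorm_big_le n (I : Type) (s : seq I) (g : I -> vec n) :
  vnorm (fun i => \big[Rplus/R0]_(k <- s) g k i) <= \big[Rplus/R0]_(k <- s) vnorm (g k).
Proof.
elim: s => [|a s IH].
  have -> : (fun i => \big[Rplus/R0]_(k <- [::]) g k i) = (fun _ => 0).
    by apply: functional_extensionality => i; rewrite big_nil.
  by rewrite vnorm0 big_nil; lra.
have -> : (fun i => \big[Rplus/R0]_(k <- a :: s) g k i)
        = vadd (g a) (fun i => \big[Rplus/R0]_(k <- s) g k i).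
  by apply: functional_extensionality => i; rewrite big_cons.
by rewrite big_cons; apply: Rle_trans (vnormD_le _ _) _; lra.
Qed.

Lemma convex_comb_close m (w a b : 'I_m -> R) e :
  (forall k, 0 <= w k) -> vsum w = 1 -> (forall k, Rabs (a k - b k) <= e) ->
  Rabs (vsum (fun k => w k * a k) - vsum (fun k => w k * b k)) <= e.
Proof.
move=> Hw Hws Hab.
have -> : vsum (fun k => w k * a k) - vsum (fun k => w k * b k) = vsum (fun k => w k * (a k - b k)).
  rewrite (@eq_vsum _ (fun k => w k * (a k - b k)) (fun k => w k * a k + -1 * (w k * b k)));
    last by move=> k; ring.
  by rewrite vsumD vsumZ; ring.
apply: Rle_trans (abs_vsum_le _) _.
apply: Rle_trans (le_vsum (G := fun k => e * w k) _) _; last by rewrite vsumZ Hws; lra.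
by move=> k; rewrite Rabs_mult Rabs_right; [have := Hab k; have := Hw k; nra | have := Hw k; lra].
Qed.

Section ClarkeJacobian.
Variables (n : nat) (Lam : mat n) (lm : R) (P : vec n -> vec n).
Hypotheses (Hlm : 0 < lm) (HP : scaled_lipschitz Lam lm P).

(* Compare [P (u + tau h) - P u] with [tau J h] for a small step [tau]. *)
Lemma jacobian_scaled_bounded u J : jacobian_at P u J -> scaled_bounded Lam lm J.
Proof.
move=> HJ h.
have [Hh0|Hh0] := Req_dec (vnorm h) 0.
  by rewrite (vnorm_eq0 Hh0) !mv0 vnorm0; lra.
have Hh : 0 < vnorm h by have := vnorm_ge0 h; lra.
apply: le_epsilon => eps Heps.
have [d [Hd Hjac]] := HJ (eps / (lm * vnorm h)) (Rdiv_lt_0_compat _ _ Heps (Rmult_lt_0_compat _ _ Hlm Hh)).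
set tau := d / (2 * vnorm h).
have Htau : 0 < tau by apply: Rdiv_lt_0_compat; lra.
set y := fun i => u i + tau * h i.
have Eyu : vsub y u = (fun i => tau * h i).
  by apply: functional_extensionality => i; rewrite /vsub /y; ring.
have Hnyu : vnorm (vsub y u) = tau * vnorm h by rewrite Eyu vnormZ Rabs_right; lra.
have Hlt : vnorm (vsub y u) < d by rewrite Hnyu /tau; field_simplify; lra.
have H1 := Hjac y Hlt; rewrite Eyu mvZ vnormZ Rabs_right in H1; last lra.
have H2 := vnorm_sub_ge (fun i => tau * mv J h i) (vsub (P y) (P u)).
rewrite (vnorm_distC (fun i => tau * mv J h i)) vnormZ Rabs_right in H2; last lra.
have H3 := HP y u; rewrite Eyu mvZ vnormZ Rabs_right in H3; last lra.
have E : eps / (lm * vnorm h) * (tau * vnorm h) = tau * (eps / lm) by field; lra.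
rewrite E in H1.
have H4 : lm * (tau * vnorm (mv J h)) <= tau * vnorm (mv Lam h) + tau * eps.
  have E2 : lm * (tau * (eps / lm)) = tau * eps by field; lra.
  by nra.
by apply: (Rmult_le_reg_l tau) => //; nra.
Qed.

Lemma scaled_bounded_lim (Jk : nat -> mat n) D :
  (forall k, scaled_bounded Lam lm (Jk k)) -> (forall i j, Un_cv (fun k => Jk k i j) (D i j)) ->
  scaled_bounded Lam lm D.
Proof.
move=> HJ Hc h.
have Hc0 := vnorm_ge0 (mv Lam h).
have Hd : lm * lm * dot (mv D h) (mv D h) <= vnorm (mv Lam h) * vnorm (mv Lam h).
  apply: (Rle_cv_lim (Un := fun k => lm * lm * dot (mv (Jk k) h) (mv (Jk k) h)) (Vn := fun _ => vnorm (mv Lam h) * vnorm (mv Lam h))).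
  - move=> k; have H := HJ k h; have H0 := vnorm_ge0 (mv (Jk k) h); rewrite -vnorm_sqr.
    have -> : lm * lm * (vnorm (mv (Jk k) h) * vnorm (mv (Jk k) h))
            = (lm * vnorm (mv (Jk k) h)) * (lm * vnorm (mv (Jk k) h)) by ring.
    by apply: Rmult_le_compat; nra.
  - apply: CV_mult; first exact: cv_const.
    by apply: (@cv_big _ _ (fun k i => mv (Jk k) h i * mv (Jk k) h i)) => i; apply: CV_mult; exact: cv_mv.
  - exact: cv_const.
rewrite -vnorm_sqr in Hd.
apply: Rsqr_incr_0_var; last exact: Hc0.
by rewrite /Rsqr; nra.
Qed.

Lemma scaled_bounded_convex m (w : 'I_m -> R) (Ds : 'I_m -> mat n) :
  (forall k, 0 <= w k) -> vsum w = 1 -> (forall k, scaled_bounded Lam lm (Ds k)) ->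
  scaled_bounded Lam lm (fun i j => \big[Rplus/R0]_(k : 'I_m) (w k * Ds k i j)).
Proof.
move=> Hw Hws HJ h.
have -> : mv (fun i j => \big[Rplus/R0]_(k : 'I_m) (w k * Ds k i j)) h
         = (fun i => \big[Rplus/R0]_(k : 'I_m) (fun i => w k * mv (Ds k) h i) i).
  apply: functional_extensionality => i.
  change (vsum (fun j => vsum (fun k => w k * Ds k i j) * h j)
          = vsum (fun k => w k * vsum (fun j => Ds k i j * h j))).
  rewrite (eq_vsum (G := fun j => vsum (fun k => w k * Ds k i j * h j))); last first.
    by move=> j; rewrite Rmult_comm -vsumZ; apply: eq_vsum => k; ring.
  by rewrite exchange_vsum; apply: eq_vsum => k; rewrite -vsumZ; apply: eq_vsum => j; ring.
apply: Rle_trans (Rmult_le_compat_l _ _ _ (Rlt_le _ _ Hlm) (vnorm_big_le _ _)) _.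
change (lm * vsum (fun k => vnorm (fun i => w k * mv (Ds k) h i)) <= vnorm (mv Lam h)).
rewrite -vsumZ; apply: Rle_trans (le_vsum (G := fun k => vnorm (mv Lam h) * w k) _) _.
  by move=> k; rewrite vnormZ Rabs_right; [have := HJ k h; have := Hw k; nra | have := Hw k; lra].
by rewrite vsumZ Hws; lra.
Qed.

Lemma clarke_jac_scaled_bounded u D : clarke_jac P u D -> scaled_bounded Lam lm D.
Proof.
move=> [m [w [Ds [Hw [Hws [HB ->]]]]]]; apply: scaled_bounded_convex => // k.
have [uk [Jk [Hj [_ Hc]]]] := HB k.
by apply: (scaled_bounded_lim (Jk := Jk)) => // k'; exact: jacobian_scaled_bounded (Hj k').
Qed.

Lemma scaled_bounded_mbound D : scaled_bounded Lam lm D -> mbound D (frob Lam / lm).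
Proof.
move=> HD v; have := HD v; have := mbound_frob Lam v => H1 H2.
apply: (Rmult_le_reg_l lm) => //.
have -> : lm * (frob Lam / lm * vnorm v) = frob Lam * vnorm v by field; lra.
lra.
Qed.

(* Otherwise a sequence of Jacobians at points [u_k -> ustar] stays [e]-away from the
   B-subdifferential at [ustar]; these Jacobians are bounded, so a subsequence converges,
   and its limit lies in that B-subdifferential. *)
Lemma jacobian_near_B_subdiff ustar e : 0 < e ->
  exists d, 0 < d /\ forall u J, vnorm (vsub u ustar) < d -> jacobian_at P u J ->
    exists Dst, B_subdiff P ustar Dst /\ forall i j, Rabs (J i j - Dst i j) <= e.
Proof.
move=> He; apply: NNPP => Hn.
have Hseq : forall k : nat, exists uJ : vec n * mat n,
    [/\ vnorm (vsub uJ.1 ustar) < / INR k.+1, jacobian_at P uJ.1 uJ.2 &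
        forall Dst, B_subdiff P ustar Dst -> ~ (forall i j, Rabs (uJ.2 i j - Dst i j) <= e)].
  move=> k; apply: NNPP => Hk; apply: Hn.
  exists (/ INR k.+1); split; first by apply: Rinv_0_lt_compat; apply: lt_0_INR; lia.
  move=> u J Hu HJ; apply: NNPP => Hno; apply: Hk.
  by exists (u, J); split=> // Dst HB Hc; apply: Hno; exists Dst.
have [s Hs] := functional_choice _ Hseq.
have Hbd : forall k (ij : 'I_n * 'I_n), Rabs ((s k).2 ij.1 ij.2) <= frob Lam / lm.
  move=> k [i j]; have [_ Hj _] := Hs k.
  exact/mbound_entry/scaled_bounded_mbound/jacobian_scaled_bounded/Hj.
have [phi [Hphi [l Hl]]] := bolzano_fin Hbd.
have HD : forall i j, Un_cv (fun k => (s (phi k)).2 i j) (l (i, j)) by move=> i j; exact: Hl (i, j).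
have HB : B_subdiff P ustar (fun i j => l (i, j)).
  exists (fun k => (s (phi k)).1), (fun k => (s (phi k)).2); split; last split=> //.
    by move=> k; have [_ Hj _] := Hs (phi k).
  move=> eps Heps; have [N HN] := inv_Sn_lt Heps; exists N => k Hk.
  have [Hu _ _] := Hs (phi k); apply: Rlt_le_trans Hu _.
  by apply: Rle_trans (inv_Sn_le (leq_trans Hk (increasing_ge_id Hphi k))) _; lra.
have [N HN] := cv_entrywise_eventually HD He.
have [_ _ Hfar] := Hs (phi N).
exact: Hfar _ HB (fun i j => Rlt_le _ _ (HN N (leqnn N) i j)).
Qed.

Lemma B_subdiff_usc ustar e : 0 < e ->
  exists d, 0 < d /\ forall u D, vnorm (vsub u ustar) < d -> B_subdiff P u D ->
    exists Dst, B_subdiff P ustar Dst /\ forall i j, Rabs (D i j - Dst i j) <= e.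
Proof.
move=> He.
have He2 : 0 < e / 2 by lra.
have [d0 [Hd0 Hnear]] := jacobian_near_B_subdiff ustar He2.
exists (d0 / 2); split; first lra.
move=> u D Hu [uk [Jk [Hjac [Hconv Hent]]]].
have [N1 HN1] := Hconv (d0 / 2) ltac:(lra).
have [N2 HN2] := cv_entrywise_eventually Hent He2.
set k := maxn N1 N2.
have Hd : vnorm (vsub (uk k) ustar) < d0.
  by have := vnorm_dist_triangle (uk k) u ustar; have := HN1 k (leq_maxl _ _); lra.
have [Dst [HB Hc]] := Hnear _ _ Hd (Hjac k).
exists Dst; split=> // i j.
have := HN2 k (leq_maxr _ _) i j; have := Hc i j.
have -> : D i j - Dst i j = (Jk k i j - Dst i j) - (Jk k i j - D i j) by ring.
by move=> h1 h2; apply: Rle_trans (Rabs_triang _ _) _; rewrite Rabs_Ropp; lra.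
Qed.

Lemma clarke_jac_usc ustar eps : 0 < eps ->
  exists d, 0 < d /\ forall u D, vnorm (vsub u ustar) < d -> clarke_jac P u D ->
    exists Dst, clarke_jac P ustar Dst /\ mbound (msub D Dst) eps.
Proof.
move=> Heps.
have Hn := pos_INR n.
have He : 0 < eps / (INR n + 1) by apply: Rdiv_lt_0_compat; lra.
have [d [Hd Hnear]] := B_subdiff_usc ustar He.
exists d; split=> // u D Hu [m [w [Ds [Hw [Hws [HB ->]]]]]].
have [Dk HDk] := functional_choice _ (fun k => Hnear u (Ds k) Hu (HB k)).
exists (fun i j => \big[Rplus/R0]_(k : 'I_m) (w k * Dk k i j)); split.
  by exists m, w, Dk; do 3 (split=> //); move=> k; have [] := HDk k.
apply: mbound_le (mbound_entries (e := eps / (INR n + 1)) _ _) _; first lra.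
  move=> i j; apply: (convex_comb_close (a := fun k => Ds k i j) (b := fun k => Dk k i j)) => // k.
  by have [_] := HDk k.
apply: (Rmult_le_reg_r (INR n + 1)); first lra.
have -> : INR n * (eps / (INR n + 1)) * (INR n + 1) = INR n * eps by field; lra.
nra.
Qed.
End ClarkeJacobian.

Definition newton_mat n (D LamInv H : mat n) : mat n :=
  madd (msub (@idm n) D) (mm D (mm LamInv H)).

Lemma newton_mat_perturb n (Lam LamInv D D0 H H0 : mat n) lm b h0 delta eta :
  0 < lm -> mm Lam LamInv = @idm n -> scaled_bounded Lam lm D0 -> 0 <= delta -> 0 <= b ->
  mbound (msub D D0) delta -> mbound LamInv b -> mbound H0 h0 -> mbound (msub H H0) eta ->
  mbound (msub (newton_mat D LamInv H) (newton_mat D0 LamInv H0))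
         (delta * (1 + b * (h0 + eta)) + eta / lm).
Proof.
move=> Hlm HLL HD0 Hdelta Hb HE HW HH0 HH v.
set z := mv (msub H H0) v.
have -> : mv (msub (newton_mat D LamInv H) (newton_mat D0 LamInv H0)) v
        = vadd (vsub (mv (msub D D0) (mv LamInv (mv H v))) (mv (msub D D0) v))
               (mv D0 (mv LamInv z)).
  rewrite /newton_mat /z !(mv_msub, mv_madd, mv_mm, mv_idm, mvB).
  by apply: functional_extensionality => i; rewrite /vadd /vsub; ring.
have Hv := vnorm_ge0 v.
have HHv : vnorm (mv H v) <= (h0 + eta) * vnorm v.
  by have := vnorm_sub_ge (mv H v) (mv H0 v); rewrite -mv_msub; have := HH v; have := HH0 v; lra.
have HEWH : vnorm (mv (msub D D0) (mv LamInv (mv H v))) <= delta * (b * ((h0 + eta) * vnorm v)).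
  apply: Rle_trans (HE _) _; apply: Rmult_le_compat_l => //.
  by apply: Rle_trans (HW _) _; apply: Rmult_le_compat_l.
have HDz : lm * vnorm (mv D0 (mv LamInv z)) <= eta * vnorm v.
  by have := HD0 (mv LamInv z); rewrite -(mv_mm Lam) HLL mv_idm; have := HH v; rewrite -/z; lra.
have HDz' : vnorm (mv D0 (mv LamInv z)) <= eta / lm * vnorm v.
  apply: (Rmult_le_reg_l lm) => //.
  by have -> : lm * (eta / lm * vnorm v) = eta * vnorm v by field; lra.
apply: Rle_trans (vnormD_le _ _) _; apply: Rle_trans (Rplus_le_compat_r _ _ _ (vnormB_le _ _)) _.
have := HE v; nra.
Qed.

Lemma mbound_cont_of_entries n (A : vec n -> mat n) x0 :
  (forall i j eps, 0 < eps -> exists d, 0 < d /\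
     forall y, vnorm (vsub y x0) < d -> Rabs (A y i j - A x0 i j) < eps) ->
  forall eps, 0 < eps -> exists d, 0 < d /\
     forall y, vnorm (vsub y x0) < d -> mbound (msub (A y) (A x0)) eps.
Proof.
move=> HA eps Heps.
have Hn := pos_INR n.
have He : 0 < eps / (INR n + 1) by apply: Rdiv_lt_0_compat; lra.
have [d [Hd Hnear]] := near_fin (T := ('I_n * 'I_n)%type)
  (P := fun ij y => Rabs (A y ij.1 ij.2 - A x0 ij.1 ij.2) < eps / (INR n + 1))
  (fun ij => HA ij.1 ij.2 _ He).
exists d; split=> // y Hy.
apply: mbound_le (mbound_entries (e := eps / (INR n + 1)) _ _) _; first lra.
  by move=> i j; apply: Rlt_le; exact: (Hnear y Hy (i, j)).
apply: (Rmult_le_reg_r (INR n + 1)); first lra.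
have -> : INR n * (eps / (INR n + 1)) * (INR n + 1) = INR n * eps by field; lra.
nra.
Qed.

Lemma forward_step_dist_lt n (W : mat n) b L x x0 g g0 gx eps :
  mbound W b -> 0 <= b -> vnorm (vsub gx g0) <= L * vnorm (vsub x x0) ->
  vnorm (vsub x x0) < eps -> vnorm (vsub gx g) <= eps ->
  vnorm (vsub (vsub x (mv W g)) (vsub x0 (mv W g0))) < (1 + b * (1 + Rabs L)) * eps.
Proof.
move=> HW Hb HL Hx Hg.
have -> : vsub (vsub x (mv W g)) (vsub x0 (mv W g0)) = vsub (vsub x x0) (mv W (vsub g g0)).
  by rewrite mvB; apply: functional_extensionality => i; rewrite /vsub; ring.
have Hgg : vnorm (vsub g g0) <= (1 + Rabs L) * eps.
  have := vnorm_dist_triangle g gx g0; rewrite (vnorm_distC g gx).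
  have HLx : L * vnorm (vsub x x0) <= Rabs L * eps.
    apply: Rle_trans (Rmult_le_compat_r _ _ _ (vnorm_ge0 _) (Rle_abs L)) _.
    by apply: Rmult_le_compat_l; [exact: Rabs_pos | lra].
  lra.
apply: Rle_lt_trans (vnormB_le _ _) _; have := HW (vsub g g0); nra.
Qed.

Unset Implicit Arguments.
Theorem lemma4p3
  (n : nat)
  (f : vec n -> R) (gradf : vec n -> vec n) (hessf : vec n -> mat n) (L : R)
  (r : vec n -> ereal) (prox : vec n -> vec n)
  (xstar : vec n) (Lam LamInv : mat n) (lm lM C : R)
  (* f is twice continuously differentiable, with gradient gradf and Hessian hessf *)
  (Hgrad : forall x eps, 0 < eps -> exists delta, 0 < delta /\ forall y,
      vnorm (vsub y x) < delta ->
      Rabs (f y - f x - dot (gradf x) (vsub y x)) <= eps * vnorm (vsub y x))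
  (Hhess : forall x, jacobian_at gradf x (hessf x))
  (Hhess_cont : forall x i j eps, 0 < eps -> exists delta, 0 < delta /\ forall y,
      vnorm (vsub y x) < delta -> Rabs (hessf y i j - hessf x i j) < eps)
  (* gradf is L-Lipschitz *)
  (Hlip : forall x y, vnorm (vsub (gradf x) (gradf y)) <= L * vnorm (vsub x y))
  (* r convex, lsc, proper; prox = prox^{Lam}_r *)
  (Hrconv : convex_fun r) (Hrlsc : lsc_fun r) (Hrprop : proper_fun r)
  (Hprox : forall x, is_prox Lam r x (prox x))
  (* Lam in S^n_{++}, lM I >= Lam >= lm I, lm > 0, LamInv = Lam^{-1} *)
  (HLsym : mat_symmetric Lam) (Hlm : 0 < lm)
  (HLlow : forall v, lm * dot v v <= dot v (mv Lam v))
  (HLup : forall v, dot v (mv Lam v) <= lM * dot v v)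
  (HLinv : is_inverse Lam LamInv)
  (HC : 0 < C)
  (* every M in M^{Lam}(xstar) is nonsingular with ||M^{-1}|| <= C *)
  (Hreg : forall M,
      in_Mset prox LamInv (hessf xstar) (vsub xstar (mv LamInv (gradf xstar))) M ->
      inv_norm_le M C) :
  forall bc gc, 0 < bc < 1 -> 0 < gc < bc / C ->
  exists epsc, 0 < epsc /\
    forall (Sb Tb : Type) (G : Sb -> vec n -> vec n) (H : Tb -> vec n -> mat n),
    (forall t x, mat_symmetric (H t x)) ->
    forall (s : Sb) (t : Tb) (x : vec n),
      vnorm (vsub x xstar) < epsc ->
      vnorm (vsub (gradf x) (G s x)) <= epsc ->
      spec_norm_le (msub (hessf x) (H t x)) (/ 2 * lm * gc) ->
      forall M, in_Mset prox LamInv (H t x) (vsub x (mv LamInv (G s x))) M ->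
        inv_norm_le M (C / (1 - bc)).
Proof.
move=> bc gc Hbc [Hgc HgcC].
have HP := prox_scaled_lipschitz HLsym Hrconv Hlm HLlow Hprox.
have Hb := frob_ge0 LamInv; have Hh0 := frob_ge0 (hessf xstar).
set b := frob LamInv in Hb *; set h0 := frob (hessf xstar) in Hh0 *.
set delta := gc / (4 * (1 + b * (h0 + lm * gc))).
have Hden : 0 < 1 + b * (h0 + lm * gc).
  have : 0 <= b * (h0 + lm * gc) by apply: Rmult_le_pos; nra.
  lra.
have Hdelta : 0 < delta by apply: Rdiv_lt_0_compat; lra.
have [dH [HdH Hhess_near]] := mbound_cont_of_entries (Hhess_cont xstar) (eps := lm * gc / 4) ltac:(nra).
have [dU [HdU Husc]] := clarke_jac_usc Hlm HP (vsub xstar (mv LamInv (gradf xstar))) Hdelta.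
set K := 1 + b * (1 + Rabs L).
have HK : 1 <= K by have := Rabs_pos L; rewrite /K; nra.
exists (Rmin dH (dU / K)); split; first by apply: Rmin_pos => //; apply: Rdiv_lt_0_compat; lra.
move=> Sb Tb G H _ s t x Hx HG HH M [D [HD ->]].
have Hu : vnorm (vsub (vsub x (mv LamInv (G s x))) (vsub xstar (mv LamInv (gradf xstar)))) < dU.
  apply: Rlt_le_trans (forward_step_dist_lt (mbound_frob LamInv) Hb (Hlip x xstar)
    (Rlt_le_trans _ _ _ Hx (Rmin_r _ _)) (Rle_trans _ _ _ HG (Rmin_r _ _))) _.
  by change (K * (dU / K) <= dU); right; field; lra.
have [Dstar [HDstar HE]] := Husc _ _ Hu HD.
have HHt := mbound_msub_trans (spec_norm_le_mbound HH) (Hhess_near x (Rlt_le_trans _ _ _ Hx (Rmin_l _ _))).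
apply: (inv_norm_le_perturb HC HgcC (proj2 Hbc) (Hreg _ (ex_intro _ Dstar (conj HDstar erefl)))).
apply: mbound_le (newton_mat_perturb Hlm (proj1 HLinv) (clarke_jac_scaled_bounded Hlm HP HDstar)
  (Rlt_le _ _ Hdelta) Hb HE (mbound_frob _) (mbound_frob _) HHt) _.
have E1 : delta * (1 + b * (h0 + lm * gc)) = gc / 4 by rewrite /delta; field; lra.
have E2 : (/ 2 * lm * gc + lm * gc / 4) / lm = 3 / 4 * gc by field; lra.
have : 0 <= delta * b * (lm * gc) by apply: Rmult_le_pos; nra.
rewrite E2 -/h0; nra.
Qed.
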